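(* For any causal encoding policy $\mathbb{P}_E$ and any $K\in\mathbb{N}_{+}$, with $\hat x(k)=\mathbb{E}[x(k)\mid a(0:k)]$, $$\frac1{K\tau}\sum_{k=0}^{K-1}\mathbb{E}[\ell(a(k))]\ \ge\ \frac1\tau\,\theta^{-1}\Big(\frac1K I\big(x(0:K-1);\hat x(0:K-1)\big)\Big).$$ Here $I$ denotes mutual information in bits.
   Context: Standing assumptions: $A\in\mathbb{R}^{n\times n}$ is Hurwitz, $BB^\top\succ0$, and $\Sigma_0\succ0$. Source: $dx_t=Ax_t\,dt+B\,dw_t$, with $x_0\sim\mathcal{N}(0,\Sigma_0)$ and $w$ a standard $n$-dimensional Brownian motion. Fix $\tau>0$ and let $x(k)=x_{k\tau}$. Encoding policies: $\{0,1\}^*$ is the set of finite binary strings, including the empty string $\emptyset$; $\ell(a)$ is the length of $a$, with $\ell(\emptyset)=0$. A causal encoding policy $\mathbb{P}_E$ is a sequence of Borel stochastic kernels $\mathbb{P}[a(k)\mid a(0:k-1),x(0:k)]$, $k\in\mathbb{N}_0$, with $a(k)\in\{0,1\}^*$. The function $\theta$: $\theta:[0,\infty)\to[0,\infty)$ is $\theta(x)=x+(1+x)\log_2(1+x)-x\log_2x$, with $0\log0=0$. It is strictly increasing and concave, with inverse $\theta^{-1}$. *)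

From HB Require Import structures.
From mathcomp Require Import all_boot all_order all_algebra.
From mathcomp Require Import all_classical all_reals all_analysis.
Import Order.TTheory GRing.Theory Num.Theory.
Import numFieldNormedType.Exports.

Set Implicit Arguments.
Unset Strict Implicit.
Unset Printing Implicit Defensive.

Local Open Scope classical_set_scope.
Local Open Scope ring_scope.

Section Defs.
Variable R : realType.

Definition expm (n : nat) (M : 'M[R]_n) : 'M[R]_n :=
  \matrix_(i, j) limn (fun N : nat => \sum_(k < N) (M ^+ k) i j / (k`!)%:R).

(* A is Hurwitz: every (complex) eigenvalue a + i b of A has negative real
   part.  Written over the reals: A (v + i w) = (a + i b) (v + i w) with
   (v, w) <> (0, 0), i.e.  A v = a v - b w,  A w = b v + a w. *)
Definition Hurwitz (n : nat) (A : 'M[R]_n) : Prop :=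
  forall (a b : R) (v w : 'cV[R]_n), (v != 0) || (w != 0) ->
    A *m v = a *: v - b *: w -> A *m w = b *: v + a *: w -> a < 0.

Definition posdef (n : nat) (M : 'M[R]_n) : Prop :=
  M^T = M /\ forall v : 'rV[R]_n, v != 0 -> 0 < (v *m M *m v^T) 0 0.

Definition mx_boxes (p q : nat) : set (set 'M[R]_(p, q)) :=
  [set B | exists a b : 'M[R]_(p, q),
     B = [set M : 'M[R]_(p, q) | forall i j, a i j < M i j <= b i j]].

Definition mx_borel (p q : nat) : set (set 'M[R]_(p, q)) := <<s @mx_boxes p q>>.

Definition mx_borel_fun (p q : nat) (f : 'M[R]_(p, q) -> R) : Prop :=
  forall c : R, mx_borel (f @^-1` `]-oo, c]).

Definition Phi (n : nat) (A : 'M[R]_n) (tau : R) : 'M[R]_n := expm (tau *: A).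

Definition Wnoise (n : nat) (A B : 'M[R]_n) (tau : R) : 'M[R]_n :=
  \matrix_(i, j) Rintegral lebesgue_measure `[0, tau]
     (fun s => (expm (s *: A) *m (B *m B^T) *m (expm (s *: A))^T) i j).

(* Sig k = Cov(x(k)) = Sigma(k tau). *)
Fixpoint Sig (n : nat) (A B Sigma0 : 'M[R]_n) (tau : R) (k : nat) : 'M[R]_n :=
  match k with
  | 0 => Sigma0
  | k'.+1 => Phi A tau *m Sig A B Sigma0 tau k' *m (Phi A tau)^T + Wnoise A B tau
  end.

(* Cross covariance E[x(j) x(k)^T]. *)
Definition covblk (n : nat) (A B Sigma0 : 'M[R]_n) (tau : R) (j k : nat)
  : 'M[R]_n :=
  if (j <= k)%N then Sig A B Sigma0 tau j *m ((Phi A tau)^T) ^+ (k - j)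
  else (Phi A tau) ^+ (j - k) *m Sig A B Sigma0 tau k.

Section Prob.
Context (d : measure_display) (T : measurableType d) (P : probability T R).

(* x j i w = i-th coordinate of x(j) = x_{j tau} at outcome w. *)
Definition Xpast (n : nat) (x : nat -> 'I_n -> T -> R) (k : nat) (w : T)
  : 'M[R]_(k.+1, n) := \matrix_(j < k.+1, i < n) x j i w.

Definition Xblock (n K : nat) (x : nat -> 'I_n -> T -> R) (w : T)
  : 'M[R]_(K, n) := \matrix_(j < K, i < n) x j i w.

(* (x(k))_k is the sampled process x_{k tau} of dx = Ax dt + B dw,
   x_0 ~ N(0, Sigma0): every finite block (x(0),...,x(m)) is a centered
   Gaussian vector with covariance blocks covblk j k, expressed through its
   characteristic function. *)
Definition sampled_source (n : nat) (A B Sigma0 : 'M[R]_n) (tau : R)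
  (x : nat -> 'I_n -> T -> R) : Prop :=
  (forall k i, measurable_fun setT (x k i)) /\
  forall (m : nat) (C : 'M[R]_(m.+1, n)),
    let lin w := \sum_(j < m.+1) \sum_(i < n) C j i * x j i w in
    let qf := \sum_(j < m.+1) \sum_(k < m.+1)
                (row j C *m covblk A B Sigma0 tau j k *m (row k C)^T) 0 0 in
    (\int[P]_w (cos (lin w))%:E = (expR (- qf / 2))%:E)%E /\
    (\int[P]_w (sin (lin w))%:E = 0)%E.

(* Causal encoding policy: q k prev X s is the probability of emitting
   a(k) = s given a(0:k-1) = prev and x(0:k) = X (rows of X = times);
   Borel stochastic kernels on {0,1}^*. *)
Definition policy (n : nat)
  (q : forall k : nat, seq (seq bool) -> 'M[R]_(k.+1, n) -> seq bool -> R) : Prop :=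
  (forall k prev X s, 0 <= q k prev X s) /\
  (forall k prev X, (\esum_(s in [set: seq bool]) (q k prev X s)%:E = 1)%E) /\
  (forall k prev s, mx_borel_fun (fun X => q k prev X s)).

(* The codewords a(k) are generated from the source by the policy q:
   joint law of (a(0:m), x(0:N)) for all m <= N. *)
Definition generated_by (n : nat) (x : nat -> 'I_n -> T -> R)
  (a : nat -> T -> seq bool)
  (q : forall k : nat, seq (seq bool) -> 'M[R]_(k.+1, n) -> seq bool -> R) : Prop :=
  (forall k s, measurable (a k @^-1` [set s])) /\
  forall (m N : nat) (s : nat -> seq bool) (E : set 'M[R]_(N.+1, n)),
    (m <= N)%N -> mx_borel E ->
    P [set w | (forall j, (j <= m)%N -> a j w = s j) /\ E (Xpast x N w)] =
    (\int[P]_(w in Xpast x N @^-1` E)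
        (\prod_(k < m.+1) q k [seq s j | j <- iota 0 k] (Xpast x k w) (s k))%:E)%E.

Definition exp_len (a : nat -> T -> seq bool) (k : nat) : \bar R :=
  (\int[P]_w ((size (a k w))%:R)%:E)%E.

(* Conditional expectation xhat(k) = E[x(k) | a(0:k)]; since a(0:k) takes
   countably many values this is the elementary conditional expectation on
   the atoms {a(0:k) = a(0:k)(w)} (set to 0 on null atoms). *)
Definition past_event (a : nat -> T -> seq bool) (k : nat) (w : T) : set T :=
  [set w' | forall j, (j <= k)%N -> a j w' = a j w].

Definition xhat (n : nat) (x : nat -> 'I_n -> T -> R) (a : nat -> T -> seq bool)
  (k : nat) (w : T) (i : 'I_n) : R :=
  let Ev := past_event a k w in
  if (0 < P Ev)%E then fine (\int[P]_(w' in Ev) (x k i w')%:E)%E / fine (P Ev)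
  else 0.

Definition Xhatblock (n K : nat) (x : nat -> 'I_n -> T -> R)
  (a : nat -> T -> seq bool) (w : T) : 'M[R]_(K, n) :=
  \matrix_(j < K, i < n) xhat x a j w i.

Definition log2 (y : R) : R := ln y / ln 2.

Definition mx_partition (p q m : nat) (E : 'I_m -> set 'M[R]_(p, q)) : Prop :=
  (forall i, mx_borel (E i)) /\
  (forall i j, i != j -> E i `&` E j = set0) /\
  \bigcup_(i in [set: 'I_m]) E i = [set: 'M[R]_(p, q)].

Definition mi_term (pxy px py : R) : R :=
  if pxy == 0 then 0 else pxy * log2 (pxy / (px * py)).

(* General (Dobrushin / Gelfand-Yaglom-Perez) mutual information: supremum
   over finite Borel partitions of the discrete mutual informations. *)
Definition mutual_info (p1 q1 p2 q2 : nat) (X : T -> 'M[R]_(p1, q1))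
  (Y : T -> 'M[R]_(p2, q2)) : \bar R :=
  ereal_sup [set z | exists (m1 m2 : nat) (E : 'I_m1 -> set 'M[R]_(p1, q1))
      (F : 'I_m2 -> set 'M[R]_(p2, q2)),
      mx_partition E /\ mx_partition F /\
      z = (\sum_(i < m1) \sum_(j < m2)
             mi_term (fine (P (X @^-1` E i `&` Y @^-1` F j)))
                     (fine (P (X @^-1` E i))) (fine (P (Y @^-1` F j))))%:E].

End Prob.

Definition xlog2x (y : R) : R := if y == 0 then 0 else y * log2 y.

Definition theta (y : R) : R := y + (1 + y) * log2 (1 + y) - xlog2x y.

Definition theta_inv (z : R) : R := xget 0 [set y | 0 <= y /\ theta y = z].

Definition theta_inv_e (z : \bar R) : \bar R :=
  match z with
  | EFin r => (theta_inv r)%:E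
  | +oo%E => +oo%E
  | -oo%E => 0%E
  end.

End Defs.

From HB Require Import structures.
From mathcomp Require Import all_boot all_order all_algebra.
From mathcomp Require Import all_classical all_reals all_analysis.
From mathcomp Require Import measurable_realfun ring lra zify.
Import Order.TTheory GRing.Theory Num.Theory.
Local Open Scope classical_set_scope.
Local Open Scope ring_scope.

(* Xhat(0:K-1) is a function of the codewords a(0:K-1), so every finite
   quantization of it has its cells indexed by distinct K-tuples of binary words,
   and the discrete mutual information of two partitions is at most the entropy
   of the cells of Xhat.  For 0 < rho < 1 the weights (1-rho)^K (rho/2)^L of the
   K-tuples of total length L satisfy Kraft's inequality, so by Gibbs' inequality
   that entropy is at most  K log2 (1/(1-rho)) + (1 - log2 rho) E[L].  With
   rho = y/(1+y) the right-hand side is K theta(y) + (1 - log2 rho) (E[L] - K y),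
   hence theta(y) = I/K forces y <= E[L]/K. *)

Section CountableValued.
Context {R : realType} {d : measure_display} {T : measurableType d} {C : countType}.
Variable f : T -> C.
Hypothesis mf : forall c, measurable (f @^-1` [set c]).

Lemma measurable_preimage_countable (U : set C) : measurable (f @^-1` U).
Proof.
have -> : f @^-1` U = \bigcup_c f @^-1` ([set c] `&` U).
  by apply/seteqP; split => [w Uw|w [c _ []]] //; exists (f w).
apply: countable_bigcupT_measurable => [|c]; first exact: countableP.
have [Uc|nUc] := pselect (U c).
  by rewrite (_ : _ `&` _ = [set c]) //; apply/seteqP; split => [? []|? ->].
by rewrite (_ : _ `&` _ = set0) ?preimage_set0 //; apply/seteqP; split => [? [->]|].
Qed.

Lemma measurable_fun_countable (g : C -> \bar R) :
  measurable_fun setT (g \o f).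
Proof.
by move=> _ B _; rewrite setTI comp_preimage; exact: measurable_preimage_countable.
Qed.

End CountableValued.

Section Kraft.
Context {R : realFieldType}.
Variable rho : R.
Hypotheses (rho_ge0 : 0 <= rho) (rho_le1 : rho <= 1).

Definition word_weight (s : seq bool) : R := (1 - rho) * (rho / 2) ^+ size s.

Definition tuple_weight (t : seq (seq bool)) : R := \prod_(s <- t) word_weight s.

Lemma tuple_weightE t :
  tuple_weight t = (1 - rho) ^+ size t * (rho / 2) ^+ sumn (map size t).
Proof.
elim: t => [|s t IH]; first by rewrite /tuple_weight big_nil mulr1.
by rewrite /tuple_weight big_cons -/(tuple_weight _) IH /word_weight /= !exprS exprD; ring.
Qed.


Definition first_symbol (t : seq (seq bool)) : option bool := ohead (head [::] t).

Definition drop_symbol (t : seq (seq bool)) : seq (seq bool) :=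
  match t with
  | (_ :: s) :: r => s :: r
  | [::] :: r => r
  | [::] => [::]
  end.

Definition symbol_weight (h : option bool) : R :=
  if h is Some _ then rho / 2 else 1 - rho.

Definition symbol_count (t : seq (seq bool)) : nat := size t + sumn (map size t).

Lemma tuple_weight_drop_symbol s r :
  tuple_weight (s :: r) = symbol_weight (ohead s) * tuple_weight (drop_symbol (s :: r)).
Proof.
rewrite /tuple_weight; case: s => [|b s]; rewrite !big_cons /word_weight /=.
  by rewrite expr0 mulr1.
by rewrite exprS; ring.
Qed.

Lemma size_drop_symbol s r :
  size (drop_symbol (s :: r)) = if ohead s is Some _ then (size r).+1 else size r.
Proof. by case: s. Qed.

Lemma symbol_count_drop_symbol s r :
  (symbol_count (drop_symbol (s :: r))).+1 = symbol_count (s :: r).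
Proof. by case: s => [|b s] /=; rewrite /symbol_count /=; lia. Qed.

Lemma drop_symbol_inj s1 r1 s2 r2 : ohead s1 = ohead s2 ->
  drop_symbol (s1 :: r1) = drop_symbol (s2 :: r2) -> s1 :: r1 = s2 :: r2.
Proof.
by case: s1 => [|b1 s1]; case: s2 => [|b2 s2] //=; [move=> _ -> | move=> [->] [-> ->]].
Qed.

Lemma sum_symbol_weight : \sum_(h : option bool) symbol_weight h = 1.
Proof.
have -> : index_enum {: option bool} = [:: None; Some true; Some false].
  by rewrite /index_enum !unlock /= /option_enum /= !unlock.
by rewrite !big_cons big_nil /=; field.
Qed.

Lemma sum_tuple_weight_size0 (S : seq (seq (seq bool))) :
  uniq S -> (forall t, t \in S -> size t = 0%N) -> \sum_(t <- S) tuple_weight t <= 1.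
Proof.
move=> uS S0; have sub : {subset S <= [:: [::]]}.
  by move=> t /S0/size0nil ->; rewrite mem_seq1.
have := uniq_leq_size uS sub; case: S sub {uS S0} => [|t [|//]] sub _.
  by rewrite big_nil ler01.
have := sub t (mem_head _ _); rewrite mem_seq1 big_seq1 => /eqP ->.
by rewrite /tuple_weight big_nil.
Qed.

(* Kraft's inequality: a K-tuple of binary words is a word over the three
   symbols 0, 1 and end-of-word, the K-tuples form a prefix-free set of such
   words, and [symbol_weight] is a probability on the three symbols; split on
   the first symbol and induct on the number of symbols. *)
Lemma sum_tuple_weight_le1_bounded N : forall K (S : seq (seq (seq bool))),
  uniq S -> (forall t, t \in S -> size t = K /\ (symbol_count t <= N)%N) ->
  \sum_(t <- S) tuple_weight t <= 1.
Proof.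
elim: N => [|N IH] [|K] S uS HS;
  try exact: sum_tuple_weight_size0 uS (fun t tS => (HS t tS).1).
  by rewrite big1_seq // => t /andP[_ /HS[st]]; rewrite /symbol_count st.
rewrite (partition_big first_symbol xpredT) //= -sum_symbol_weight.
apply: ler_sum => h _; set Sh := [seq t <- S | first_symbol t == h].
have Sh_cons t : t \in Sh -> exists s r,
    [/\ t = s :: r, ohead s = h, size r = K & (symbol_count t <= N.+1)%N].
  rewrite mem_filter => /andP[/eqP <-] /HS[].
  by case: t => [|s r] //= [<-] ?; exists s, r.
rewrite -big_filter -/Sh.
have -> : \sum_(t <- Sh) tuple_weight t =
    symbol_weight h * \sum_(t <- map drop_symbol Sh) tuple_weight t.
  rewrite big_map mulr_sumr; apply: eq_big_seq => t /Sh_cons[s [r [-> <- _ _]]].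
  exact: tuple_weight_drop_symbol.
apply: ler_piMr; first by case: h {Sh Sh_cons} => *; rewrite ?subr_ge0 ?divr_ge0.
apply: (IH (if h is Some _ then K.+1 else K)).
  rewrite map_inj_in_uniq ?filter_uniq // => t1 t2.
  move=> /Sh_cons[s1 [r1 [-> e1 _ _]]] /Sh_cons[s2 [r2 [-> e2 _ _]]].
  by apply: drop_symbol_inj; rewrite e1 e2.
move=> _ /mapP[t /Sh_cons[s [r [-> <- <- cnt]]] ->].
by rewrite size_drop_symbol -ltnS symbol_count_drop_symbol.
Qed.

Lemma sum_tuple_weight_le1 K (S : seq (seq (seq bool))) :
  uniq S -> (forall t, t \in S -> size t = K) -> \sum_(t <- S) tuple_weight t <= 1.
Proof.
move=> uS SK.
apply: (sum_tuple_weight_le1_bounded (\sum_(t <- S) symbol_count t) K) => // t tS.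
by split; [exact: SK | rewrite (bigD1_seq t) //= leq_addr].
Qed.

End Kraft.

Section Log2.
Context {R : realType}.

Lemma ln2_gt0 : 0 < ln (2 : R).
Proof. by apply: ln_gt0; lra. Qed.

Lemma log2M (u v : R) : 0 < u -> 0 < v -> log2 (u * v) = log2 u + log2 v.
Proof. by move=> u0 v0; rewrite /log2 lnM ?posrE // mulrDl. Qed.

Lemma log2V (u : R) : 0 < u -> log2 u^-1 = - log2 u.
Proof. by move=> u0; rewrite /log2 lnV ?posrE // mulNr. Qed.

Lemma log2Xn (u : R) k : 0 < u -> log2 (u ^+ k) = k%:R * log2 u.
Proof. by move=> u0; rewrite /log2 lnXn // mulr_natl mulrnAl. Qed.

Lemma log2_2 : log2 (2 : R) = 1.
Proof. by rewrite /log2 divff // lt0r_neq0 // ln2_gt0. Qed.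

Lemma ler_log2 (u v : R) : 0 < u -> u <= v -> log2 u <= log2 v.
Proof.
move=> u0 uv; rewrite /log2 ler_pM2r ?invr_gt0 ?ln2_gt0 //.
by rewrite ler_ln ?posrE // (lt_le_trans u0 uv).
Qed.

Lemma log2_lt0 (u : R) : 0 < u < 1 -> log2 u < 0.
Proof. by move=> u01; rewrite /log2 pmulr_llt0 ?invr_gt0 ?ln2_gt0 ?ln_lt0. Qed.

Lemma ln_le_subr1 (y : R) : 0 < y -> ln y <= y - 1.
Proof. by move=> y0; have := expR_ge1Dx (ln y); rewrite lnK ?posrE //; lra. Qed.

End Log2.

Section Costs.
Context {R : realType}.
Implicit Types rho : R.

Definition sep_cost rho := - log2 (1 - rho).
Definition bit_cost rho := 1 - log2 rho.

Lemma tuple_weight_gt0 rho t : 0 < rho < 1 -> 0 < tuple_weight rho t.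
Proof.
by case/andP=> r0 r1; rewrite tuple_weightE mulr_gt0 // exprn_gt0 // ?subr_gt0 ?divr_gt0.
Qed.

Lemma log2_tuple_weight rho t : 0 < rho < 1 -> - log2 (tuple_weight rho t) =
  (size t)%:R * sep_cost rho + (sumn (map size t))%:R * bit_cost rho.
Proof.
case/andP=> r0 r1; have r1' : 0 < 1 - rho by rewrite subr_gt0.
rewrite tuple_weightE log2M ?exprn_gt0 ?divr_gt0 // !log2Xn ?divr_gt0 //.
by rewrite log2M ?invr_gt0 // log2V // log2_2 /sep_cost /bit_cost; ring.
Qed.

Lemma bit_cost_gt0 rho : 0 < rho < 1 -> 0 < bit_cost rho.
Proof. by move=> r01; rewrite /bit_cost subr_gt0 (lt_trans (log2_lt0 _ r01)). Qed.

Lemma theta_costs (y : R) : 0 < y ->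
  theta y = sep_cost (y / (1 + y)) + y * bit_cost (y / (1 + y)).
Proof.
move=> y0; have y1 : 0 < 1 + y by lra.
rewrite /sep_cost /bit_cost.
have -> : 1 - y / (1 + y) = (1 + y)^-1 by field; rewrite gt_eqF.
by rewrite /theta /xlog2x gt_eqF // log2V // log2M ?invr_gt0 // log2V //; ring.
Qed.

Lemma theta_inv_le (u v : R) : 0 <= v ->
  (forall rho, 0 < rho < 1 -> u <= sep_cost rho + bit_cost rho * v) ->
  theta_inv u <= v.
Proof.
move=> v0 huv; rewrite /theta_inv; case: xgetP => [y _ [y0 yu]|_] //; subst u.
have [->|y_neq0] := eqVneq y 0; first by [].
have {y0 y_neq0} y0 : 0 < y by rewrite lt_def y_neq0.
have rho01 : 0 < y / (1 + y) < 1 by rewrite divr_gt0 ?ltr_pdivrMr /=; lra.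
have := huv _ rho01; rewrite theta_costs // lerD2l [_ * v]mulrC.
by rewrite ler_pM2r // bit_cost_gt0.
Qed.

End Costs.

Section Entropy.
Context {R : realType}.

Lemma mi_term_le (pxy px py : R) : 0 <= pxy -> pxy <= px -> pxy <= py ->
  mi_term pxy px py <= pxy * - log2 py.
Proof.
move=> pxy_ge0 pxy_px pxy_py; rewrite /mi_term; have [->|pxy_neq0] := eqVneq pxy 0.
  by rewrite mul0r.
have pxy0 : 0 < pxy by rewrite lt_def pxy_neq0.
have px0 := lt_le_trans pxy0 pxy_px; have py0 := lt_le_trans pxy0 pxy_py.
rewrite ler_pM2l // -log2V // ler_log2 ?divr_gt0 ?mulr_gt0 // invfM mulrA.
by rewrite ler_piMl ?invr_ge0 ?(ltW py0) // ler_pdivrMr // mul1r.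
Qed.

Lemma sum_mi_term_le_entropy (I J : finType) (p : I -> J -> R) (px : I -> R)
    (py : J -> R) :
  (forall i j, 0 <= p i j) -> (forall i j, p i j <= px i) ->
  (forall i j, p i j <= py j) -> (forall j, \sum_i p i j = py j) ->
  \sum_i \sum_j mi_term (p i j) (px i) (py j) <= \sum_j py j * - log2 (py j).
Proof.
move=> p_ge0 p_px p_py sum_p.
apply: (@le_trans _ _ (\sum_i \sum_j p i j * - log2 (py j))).
  by apply: ler_sum => i _; apply: ler_sum => j _; exact: mi_term_le.
by rewrite exchange_big /=; apply/ler_sum => j _; rewrite -mulr_suml sum_p.
Qed.

Lemma gibbs_term (p Q : R) : 0 <= p -> 0 <= Q -> (0 < p -> 0 < Q) ->
  p * - log2 p <= p * - log2 Q + (Q - p) / ln 2.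
Proof.
move=> p_ge0 Q_ge0 pQ; have [->|p_neq0] := eqVneq p 0.
  by rewrite !mul0r add0r subr0 divr_ge0 // ltW // ln2_gt0.
have p0 : 0 < p by rewrite lt_def p_neq0.
have Q0 := pQ p0.
have ln_ratio : p * (ln Q - ln p) <= Q - p.
  rewrite -ln_div ?posrE //; have := ler_wpM2l (ltW p0) (ln_le_subr1 _ (divr_gt0 Q0 p0)).
  by rewrite mulrBr mulrCA mulfV ?mulr1 // gt_eqF.
have l2 := @ln2_gt0 R.
rewrite /log2 -subr_ge0.
have -> : p * - (ln Q / ln 2) + (Q - p) / ln 2 - p * - (ln p / ln 2) =
    ((Q - p) - p * (ln Q - ln p)) / ln 2 by field; rewrite gt_eqF.
by rewrite divr_ge0 ?subr_ge0 // ltW.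
Qed.

Lemma gibbs_inequality (I : finType) (p Q : I -> R) :
  (forall i, 0 <= p i) -> (forall i, 0 <= Q i) -> (forall i, 0 < p i -> 0 < Q i) ->
  \sum_i p i = 1 -> \sum_i Q i <= 1 ->
  \sum_i p i * - log2 (p i) <= \sum_i p i * - log2 (Q i).
Proof.
move=> p_ge0 Q_ge0 pQ sum_p sum_Q.
apply: (@le_trans _ _ (\sum_i (p i * - log2 (Q i) + (Q i - p i) / ln 2))).
  by apply: ler_sum => i _; apply: gibbs_term; [exact: p_ge0 | exact: Q_ge0 | exact: pQ].
rewrite big_split /= -mulr_suml sumrB sum_p gerDl.
by rewrite mulr_le0_ge0 ?subr_le0 // invr_ge0 ltW // ln2_gt0.
Qed.

End Entropy.

Section Codeblock.
Context {R : realType} {d : measure_display} {T : measurableType d}.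
Implicit Types (a : nat -> T -> seq bool) (w : T).

Definition codeblock a (K : nat) w : seq (seq bool) := [seq a k w | k <- iota 0 K].

Lemma size_codeblock a K w : size (codeblock a K w) = K.
Proof. by rewrite size_map size_iota. Qed.

Lemma nth_codeblock a {K} w {k} : (k < K)%N -> nth [::] (codeblock a K w) k = a k w.
Proof. by move=> kK; rewrite (nth_map 0%N) ?size_iota // nth_iota. Qed.

Lemma measurable_codeblock a K : (forall k s, measurable (a k @^-1` [set s])) ->
  forall t, measurable (codeblock a K @^-1` [set t]).
Proof.
move=> ma t; have [tK|tK] := eqVneq (size t) K; last first.
  rewrite (_ : _ @^-1` _ = set0) // -subset0 => w /= tw.
  by move: tK; rewrite -tw size_codeblock eqxx.
rewrite (_ : _ @^-1` _ = \bigcap_(k in [set k | (k < K)%N]) a k @^-1` [set nth [::] t k]).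
  by apply: bigcap_measurableType => k _; exact: ma.
apply/seteqP; split => w /= => [<- k /= kK|tw]; first by rewrite nth_codeblock.
apply: (@eq_from_nth _ [::]) => [|k]; rewrite size_codeblock ?tK // => kK.
by rewrite nth_codeblock // tw.
Qed.

Lemma Xhatblock_codeblock (P : probability T R) n K (x : nat -> 'I_n -> T -> R) a w w' :
  codeblock a K w = codeblock a K w' -> Xhatblock P K x a w = Xhatblock P K x a w'.
Proof.
move=> ww'; have a_eq k : (k < K)%N -> a k w = a k w'.
  by move=> kK; rewrite -(nth_codeblock a w kK) -(nth_codeblock a w' kK) ww'.
apply/matrixP => j i; rewrite !mxE /xhat.
suff -> : past_event a j w = past_event a j w' by [].
apply/seteqP; split => v /= vw k kj; rewrite vw // a_eq //;
  exact: leq_ltn_trans kj (ltn_ord j).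
Qed.

Lemma measurable_Xblock n K (x : nat -> 'I_n -> T -> R) :
  (forall k i, measurable_fun setT (x k i)) ->
  forall E, mx_borel E -> measurable (Xblock K x @^-1` E).
Proof.
move=> mx E hE; suff : image_set_system setT (Xblock K x) measurable E.
  by rewrite /image_set_system /= setTI.
move: E hE; apply: smallest_sub; first exact/sigma_algebra_image/sigma_algebra_measurable.
move=> _ [lo [hi ->]]; rewrite /image_set_system /= setTI.
rewrite (_ : _ @^-1` _ =
  \bigcap_(p in [set: 'I_K * 'I_n]) (x p.1 p.2 @^-1` `]lo p.1 p.2, hi p.1 p.2])).
  apply: fin_bigcap_measurable => [|p _]; first exact: finite_finset.
  by rewrite -[_ @^-1` _]setTI; apply: mx => //; exact: measurable_itv.
apply/seteqP; split => w /= => [abw [i j] _|abw i j].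
  by have := abw i j; rewrite mxE /= in_itv.
by have := abw (i, j) I; rewrite mxE /= in_itv.
Qed.

End Codeblock.

Section MeasurePartition.
Context {R : realType} {d : measure_display} {T : measurableType d}.

Lemma bigsetU_setI_cover m (G : 'I_m -> set T) (A : set T) :
  (forall w, exists i, G i w) -> \big[setU/set0]_(i < m) (G i `&` A) = A.
Proof.
move=> cover; rewrite -bigcup_seq; apply/seteqP; split => [w [i _ []] //|w Aw].
by have [i Gi] := cover w; exists i => //=; exact: mem_index_enum.
Qed.

Lemma fine_measure_partition (P : probability T R) m (G : 'I_m -> set T) (A : set T) :
  measurable A -> (forall i, measurable (G i)) -> trivIset setT G ->
  (forall w, exists i, G i w) -> \sum_(i < m) fine (P (G i `&` A)) = fine (P A).
Proof.
move=> mA mG tG cover; have finP B : measurable B -> (fine (P B))%:E = P B.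
  by move=> mB; rewrite fineK // fin_num_measure.
apply: EFin_inj; rewrite -sumEFin finP //.
rewrite (eq_bigr _ (fun i _ => finP _ (measurableI _ _ (mG i) mA))).
rewrite -measure_bigsetU_ord ?bigsetU_setI_cover // => [i|]; first exact: measurableI.
exact: trivIset_setIr.
Qed.

Lemma sum_measure_le_integral (mu : {measure set T -> \bar R}) m (C : 'I_m -> set T)
    (c : 'I_m -> R) (f : T -> \bar R) :
  (forall j, measurable (C j)) -> trivIset setT C -> measurable_fun setT f ->
  (forall w, (0 <= f w)%E) -> (forall j, 0 <= c j) ->
  (forall j w, C j w -> ((c j)%:E <= f w)%E) ->
  (\sum_(j < m) (c j)%:E * mu (C j) <= \int[mu]_w f w)%E.
Proof.
move=> mC tC mf f_ge0 c_ge0 c_le_f.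
have term_ge0 j w : (0 <= (c j)%:E * (\1_(C j) w)%:E)%E.
  by rewrite mule_ge0 // lee_fin.
have -> : (\sum_(j < m) (c j)%:E * mu (C j) =
    \int[mu]_w \sum_(j < m) (c j)%:E * (\1_(C j) w)%:E)%E.
  rewrite ge0_integral_sum // => [|j]; last first.
    by apply/measurable_funeM/measurable_EFinP; exact: measurable_indic.
  apply: eq_bigr => j _; rewrite ge0_integralZl_EFin //.
    by rewrite integral_indic // setIT.
  by apply/measurable_EFinP; exact: measurable_indic.
apply: ge0_le_integral => //.
- by move=> w _; exact: sume_ge0.
- apply: emeasurable_sum => j.
  by apply/measurable_funeM/measurable_EFinP; exact: measurable_indic.
move=> w _; have [[j Cjw]|noC] := pselect (exists j, C j w); last first.
  rewrite big1 // => j _; rewrite indicE memNset ?mule0 // => Cjw.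
  by apply: noC; exists j.
rewrite (bigD1 j) //= big1 ?adde0 => [|i ij].
  by rewrite indicE mem_set // mule1; exact: c_le_f.
rewrite indicE memNset ?mule0 // => Ciw; move/eqP: ij; apply.
by apply: tC => //; exists w.
Qed.

End MeasurePartition.

Lemma exists_argmin_nat {T : pointedType} (A : set T) (f : T -> nat) :
  exists w0, forall w, A w -> A w0 /\ (f w0 <= f w)%N.
Proof.
have [[w Aw]|A0] := pselect (A !=set0); last first.
  by exists point => w Aw; exfalso; apply: A0; exists w.
have fA : exists m, `[< exists2 w, A w & f w = m >] by exists (f w); apply/asboolP; exists w.
case: (ex_minnP fA) => _ /asboolP[w0 Aw0 <-] min_w0; exists w0 => w' Aw'; split => //.
by apply: min_w0; apply/asboolP; exists w'.
Qed.

Lemma sum_cell_weight_le1 {R : realFieldType} {T : Type} {I : finType} (rho : R) K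
    (g : T -> seq (seq bool)) (C : I -> set T) (r : I -> T) :
  0 <= rho -> rho <= 1 -> (forall w, size (g w) = K) -> trivIset setT C ->
  (forall i w w', g w = g w' -> C i w -> C i w') ->
  \sum_(i | `[< C i (r i) >]) tuple_weight rho (g (r i)) <= 1.
Proof.
move=> rho_ge0 rho_le1 size_g tC C_sat.
rewrite -big_filter -(big_map (fun i => g (r i)) xpredT (tuple_weight rho)).
apply: (sum_tuple_weight_le1 _ rho_ge0 rho_le1 K) => [|_ /mapP[i _ ->]] //.
rewrite map_inj_in_uniq ?filter_uniq ?index_enum_uniq // => i j.
rewrite !mem_filter => /andP[/asboolP Ci _] /andP[/asboolP Cj _] /= gij.
by apply: tC => //; exists (r i); split => //; apply: C_sat Cj.
Qed.

Section MatrixPartition.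
Context {R : realType} {T : Type} {p q m : nat} {E : 'I_m -> set 'M[R]_(p, q)}.
Hypothesis hE : mx_partition E.

Lemma mx_partition_cover (M : 'M[R]_(p, q)) : exists i, E i M.
Proof.
have [i _ Ei] : (\bigcup_(i in setT) E i) M by rewrite hE.2.2.
by exists i.
Qed.

Lemma mx_partition_trivIset (f : T -> 'M[R]_(p, q)) : trivIset setT (fun i => f @^-1` E i).
Proof.
apply/trivIsetP => i j _ _ ij; rewrite -preimage_setI hE.2.1 //; exact: preimage_set0.
Qed.

End MatrixPartition.

Section PartitionBound.
Context {R : realType} {d : measure_display} {T : measurableType d}.
Variables (P : probability T R) (n K : nat).
Variables (x : nat -> 'I_n -> T -> R) (a : nat -> T -> seq bool).
Hypothesis mx : forall k i, measurable_fun setT (x k i).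
Hypothesis ma : forall k s, measurable (a k @^-1` [set s]).
Variables (m1 m2 : nat) (E : 'I_m1 -> set 'M[R]_(K, n)) (F : 'I_m2 -> set 'M[R]_(K, n)).
Hypotheses (hE : mx_partition E) (hF : mx_partition F).

Local Notation X := (Xblock K x).
Local Notation Y := (Xhatblock P K x a).
Local Notation len w := (sumn (map size (codeblock a K w))).

Let cell j := Y @^-1` F j.
Let q j := fine (P (cell j)).

Let measurable_cell j : measurable (cell j).
Proof.
rewrite (_ : cell j = codeblock a K @^-1` (codeblock a K @` cell j)).
  exact/measurable_preimage_countable/measurable_codeblock.
apply/seteqP; split => [w|w [w' Cw' /Xhatblock_codeblock]] /=; first by exists w.
by rewrite /cell /= => <-.
Qed.

Let finP (A : set T) : measurable A -> (fine (P A))%:E = P A.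
Proof. by move=> mA; rewrite fineK // fin_num_measure. Qed.

Let fine_le_measure (A B : set T) : measurable A -> measurable B -> A `<=` B ->
  fine (P A) <= fine (P B).
Proof. by move=> mA mB AB; rewrite -lee_fin !finP // le_measure ?inE. Qed.

Let q_ge0 j : 0 <= q j.
Proof. by rewrite fine_ge0. Qed.

Let sum_q : \sum_j q j = 1.
Proof.
have := @fine_measure_partition _ _ _ P _ cell setT measurableT measurable_cell
  (mx_partition_trivIset hF Y) (fun w => mx_partition_cover hF (Y w)).
by rewrite probability_setT; under eq_bigr do rewrite setIT.
Qed.

Lemma entropy_cells_le_length (rho : R) : 0 < rho < 1 ->
  ((\sum_j q j * - log2 (q j))%:E <=
     (K%:R * sep_cost rho)%:E + (bit_cost rho)%:E * \int[P]_w ((len w)%:R)%:E)%E.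
Proof.
move=> rho01; have [rho0 rho1] := andP rho01.
(* Weighting each cell by a shortest codeword tuple in it keeps the Kraft sum
   below 1, while that length bounds the length on the whole cell from below. *)
have [r hr] := choice (fun j => exists_argmin_nat (cell j) (fun w => len w)).
have q0 j : ~ cell j (r j) -> q j = 0.
  move=> nCj; rewrite /q (_ : cell j = set0) ?measure0 // -subset0 => w Cw.
  by apply: nCj; exact: (hr j w Cw).1.
pose Q j := if `[< cell j (r j) >] then tuple_weight rho (codeblock a K (r j)) else 0.
have gibbs : \sum_j q j * - log2 (q j) <= \sum_j q j * - log2 (Q j).
  apply: gibbs_inequality => // [j|j qj0|].
  - by rewrite /Q; case: ifP => // _; exact/ltW/tuple_weight_gt0.
  - rewrite /Q; case: ifPn => [_|/asboolPn/q0 qj]; first exact: tuple_weight_gt0.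
    by rewrite qj ltxx in qj0.
  rewrite -big_mkcond; apply: (sum_cell_weight_le1 _ K) => //.
  - exact: ltW.
  - exact: ltW.
  - exact: size_codeblock.
  - exact: mx_partition_trivIset.
  by move=> j w w' /(Xhatblock_codeblock P n K x) ww'; rewrite /cell /= ww'.
have cross : \sum_j q j * - log2 (Q j) =
    K%:R * sep_cost rho + bit_cost rho * \sum_j q j * (len (r j))%:R.
  have -> : K%:R * sep_cost rho = \sum_j q j * (K%:R * sep_cost rho).
    by rewrite -mulr_suml sum_q mul1r.
  rewrite mulr_sumr -big_split /=.
  apply: eq_bigr => j _; rewrite /Q; have [Cj|/q0 ->] := pselect (cell j (r j)).
    by rewrite asboolT // log2_tuple_weight // size_codeblock; ring.
  by rewrite !mul0r mulr0 add0r.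
have length : ((\sum_j q j * (len (r j))%:R)%:E <= \int[P]_w ((len w)%:R)%:E)%E.
  rewrite -sumEFin; under eq_bigr do rewrite mulrC EFinM finP //.
  apply: sum_measure_le_integral => //.
  - exact: mx_partition_trivIset.
  - exact: (measurable_fun_countable (codeblock a K) (measurable_codeblock a K ma)
      (fun t => ((sumn (map size t))%:R)%:E)).
  - by move=> j w /hr[_ lw]; rewrite lee_fin ler_nat.
apply: (@le_trans _ _ (\sum_j q j * - log2 (Q j))%:E); first by rewrite lee_fin.
rewrite cross EFinD leeD2l // EFinM; apply: lee_wpmul2l => //.
by rewrite lee_fin ltW // bit_cost_gt0.
Qed.

Lemma discrete_mutual_info_le_length (rho : R) : 0 < rho < 1 ->
  ((\sum_(i < m1) \sum_(j < m2) mi_term (fine (P (X @^-1` E i `&` Y @^-1` F j)))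
      (fine (P (X @^-1` E i))) (fine (P (Y @^-1` F j))))%:E <=
     (K%:R * sep_cost rho)%:E + (bit_cost rho)%:E * \int[P]_w ((len w)%:R)%:E)%E.
Proof.
move=> rho01; apply: (le_trans _ (entropy_cells_le_length rho rho01)); rewrite lee_fin.
have mXE i : measurable (X @^-1` E i) by apply: measurable_Xblock => //; exact: hE.1.
have mXY i j : measurable (X @^-1` E i `&` Y @^-1` F j).
  exact: measurableI (mXE i) (measurable_cell j).
apply: sum_mi_term_le_entropy => [i j|i j|i j|j].
- by rewrite fine_ge0.
- exact: fine_le_measure.
- exact: fine_le_measure (mXY i j) (measurable_cell j) _.
apply: fine_measure_partition => //; first exact: measurable_cell.
  exact: mx_partition_trivIset.
by move=> w; exact: mx_partition_cover.
Qed.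

End PartitionBound.

Lemma mutual_info_le_length {R : realType} {d : measure_display} {T : measurableType d}
    (P : probability T R) n K (x : nat -> 'I_n -> T -> R) (a : nat -> T -> seq bool) :
  (forall k i, measurable_fun setT (x k i)) ->
  (forall k s, measurable (a k @^-1` [set s])) ->
  forall rho, 0 < rho < 1 ->
  (mutual_info P (Xblock K x) (Xhatblock P K x a) <=
     (K%:R * sep_cost rho)%:E +
     (bit_cost rho)%:E * \int[P]_w ((sumn (map size (codeblock a K w)))%:R)%:E)%E.
Proof.
move=> mx ma rho rho01; apply/ereal_supP => _ [m1 [m2 [E [F [hE [hF ->]]]]]].
exact: discrete_mutual_info_le_length.
Qed.

Lemma integral_codeblock_length {R : realType} {d : measure_display}
    {T : measurableType d} (P : probability T R) (a : nat -> T -> seq bool) K :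
  (forall k s, measurable (a k @^-1` [set s])) ->
  (\int[P]_w ((sumn (map size (codeblock a K w)))%:R)%:E = \sum_(k < K) exp_len P a k)%E.
Proof.
move=> ma; rewrite /exp_len -ge0_integral_sum // => [|k]; last first.
  exact: (measurable_fun_countable (a k) (ma k) (fun s => ((size s)%:R)%:E)).
apply: eq_integral => w _; rewrite sumEFin /codeblock sumnE !big_map natr_sum.
by rewrite -(big_mkord xpredT (fun k => (size (a k w))%:R)) /index_iota subn0.
Qed.

Lemma theta_inv_e_le {R : realType} (I S : \bar R) K (tau : R) : (0 < K)%N -> 0 < tau ->
  (0 <= S)%E ->
  (forall rho, 0 < rho < 1 -> (I <= (K%:R * sep_cost rho)%:E + (bit_cost rho)%:E * S)%E) ->
  ((tau^-1)%:E * theta_inv_e ((K%:R^-1)%:E * I) <= ((K%:R * tau)^-1)%:E * S)%E.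
Proof.
move=> K0 tau0; have K0' : 0 < K%:R :> R by rewrite ltr0n.
case: S => [s| |] // S_ge0 bound; last first.
  by rewrite gt0_muley ?leey // lte_fin invr_gt0 mulr_gt0.
rewrite lee_fin in S_ge0.
have half01 : 0 < (2^-1 : R) < 1 by rewrite invr_gt0 invf_lt1 //=; lra.
case: I bound => [r| |] bound; last first.
- rewrite mulrNy gtr0_sg ?invr_gt0 // mul1e /= mule0 -EFinM lee_fin.
  by rewrite mulr_ge0 // ltW // invr_gt0 mulr_gt0.
- by have := bound _ half01; rewrite leye_eq -EFinM.
rewrite -!EFinM /= lee_fin.
have -> : (K%:R * tau)^-1 * s = tau^-1 * (K%:R^-1 * s) by rewrite invfM mulrAC mulrC.
apply: ler_wpM2l; first by rewrite invr_ge0 ltW.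
apply: theta_inv_le => [|rho /bound]; first by rewrite mulr_ge0 // invr_ge0 ltW.
rewrite -EFinM -EFinD lee_fin => r_le.
have -> : sep_cost rho + bit_cost rho * (K%:R^-1 * s) =
    K%:R^-1 * (K%:R * sep_cost rho + bit_cost rho * s) by field; rewrite gt_eqF.
by rewrite ler_pM2l ?invr_gt0.
Qed.

Theorem lemma3 (R : realType) (n : nat) (A B Sigma0 : 'M[R]_n) (tau : R)
  (hA : Hurwitz A) (hB : posdef (B *m B^T)) (hS : posdef Sigma0)
  (htau : 0 < tau)
  (d : measure_display) (T : measurableType d) (P : probability T R)
  (x : nat -> 'I_n -> T -> R) (a : nat -> T -> seq bool)
  (q : forall k : nat, seq (seq bool) -> 'M[R]_(k.+1, n) -> seq bool -> R)
  (hx : sampled_source P A B Sigma0 tau x)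
  (hq : policy q)
  (ha : generated_by P x a q)
  (K : nat) (hK : (0 < K)%N) :
  ((((K%:R * tau)^-1)%:E * \sum_(k < K) exp_len P a k) >=
   (tau^-1)%:E *
     theta_inv_e ((K%:R^-1)%:E *
       mutual_info P (Xblock K x) (Xhatblock P K x a)))%E.
Proof.
have [mx _] := hx; have [ma _] := ha.
apply: theta_inv_e_le => // [|rho rho01].
  by apply: sume_ge0 => k _; apply: integral_ge0 => w _; rewrite lee_fin.
rewrite -integral_codeblock_length //; exact: mutual_info_le_length.
Qed.
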